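(* Let $\mathcal{A}=\{0,1\}$ and let $X$ be the simplified golden-mean tree-shift, i.e. the set of trees $t$ such that for every $x\in\Sigma^*$ the triple $(t_x,t_{x0},t_{x1})$ belongs to $\{(0,0,0),(0,1,1),(1,0,0)\}$. Then $X$ is uniformly strongly irreducible with complete prefix code $\Sigma^2$: for any two patterns $u,v$ accepted by $X$ there exists $t\in X$ with $t|_{S(u)}=u$ and $t|_{wxS(v)}=v$ for every leaf $w$ of $u$ and every $x\in\Sigma^2$.
   Context: $\Sigma=\{0,1\}$. $\Sigma^*$ is the set of finite words, $\Sigma^2$ is the set of words of length $2$, and a tree is $t:\Sigma^*\to\mathcal{A}$ with $t_x=t(x)$. A pattern $u$ is a map on a finite prefix-closed support $S(u)\subseteq\Sigma^*$. A pattern is accepted by $X$ if it occurs (at some node) in some tree of $X$. For $w\in\Sigma^*$, $t|_{wS(v)}=v$ means $t_{wy}=v_y$ for all $y\in S(v)$. A leaf of $u$ is $w\in S(u)$ with $w0,w1\notin S(u)$. *)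

(* Sigma = {0,1} is bool (false = 0, true = 1);
   words Sigma^* are seq bool, with x0 = rcons x false, x1 = rcons x true,
   and concatenation wx = w ++ x. The alphabet A = {0,1} is also bool. *)
From mathcomp Require Import all_boot.
Set Implicit Arguments. Unset Strict Implicit. Unset Printing Implicit Defensive.

Definition word := seq bool.
Definition tree := word -> bool.

Definition goldenX (t : tree) : Prop :=
  forall x : word,
    (t x, t (rcons x false), t (rcons x true)) \in
      [:: (false, false, false); (false, true, true); (true, false, false)].

Record pattern := Pattern { supp : seq word; lab : word -> bool }.

Definition prefix_closed (S : seq word) : Prop :=
  forall (w : word) (a : bool), rcons w a \in S -> w \in S.

Definition is_pattern (u : pattern) : Prop := prefix_closed (supp u).

Definition occurs_at (t : tree) (w : word) (v : pattern) : Prop :=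
  forall y, y \in supp v -> t (w ++ y) = lab v y.

Definition accepted (X : tree -> Prop) (u : pattern) : Prop :=
  exists t, X t /\ exists z, occurs_at t z u.

Definition is_leaf (u : pattern) (w : word) : Prop :=
  w \in supp u /\ rcons w false \notin supp u /\ rcons w true \notin supp u.

From mathcomp Require Import all_boot.

(* Copy, at the root, an occurrence of u taken from some t0 in X. Give each
   leaf of u two 0-children, and below them copy an occurrence of v taken from
   some t1 in X. The golden-mean rule constrains only parent-children triples:
   any node may have two 0-children and a 0-node may have two 1-children, so
   both seams are admissible. *)

Definition shift (t : tree) (z : word) : tree := fun y => t (z ++ y).

Definition pad (t : tree) : tree :=
  fun y => if y is _ :: y' then t y' else false.

Lemma golden_shift (t : tree) (z : word) : goldenX t -> goldenX (shift t z).
Proof. by move=> Gt x; rewrite /shift -!rcons_cat; exact: Gt. Qed.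

Lemma golden_pad (t : tree) : goldenX t -> goldenX (pad t).
Proof. by move=> Gt [|a x] /=; [case: (t [::]); rewrite !inE | exact: Gt]. Qed.

Lemma prefix_closed_catl {S : seq word} {s s' : word} :
  prefix_closed S -> s ++ s' \in S -> s \in S.
Proof.
move=> pcS; elim/last_ind: s' => [|s' a IH]; first by rewrite cats0.
by rewrite -rcons_cat => /pcS.
Qed.

Section Graft.
Variables (S : seq word) (t s : tree).

Definition leafb (p : word) : bool :=
  [&& p \in S, rcons p false \notin S & rcons p true \notin S].

Lemma leafb_rcons (p : word) (a : bool) : rcons p a \in S -> leafb p = false.
Proof. by rewrite /leafb; case: a => ->; rewrite ?andbF. Qed.

(* [graft p y] is the label at [p ++ y] of the tree that agrees with [t] until
   the path meets a leaf of [S], and continues with [s] one letter later. *)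
Fixpoint graft (p y : word) : bool :=
  if y is a :: y' then (if leafb p then s y' else graft (rcons p a) y')
  else t p.

Lemma golden_graft (p : word) :
  goldenX t -> goldenX s -> s [::] = false -> goldenX (graft p).
Proof.
move=> Gt Gs s0 x; elim: x p => [|b x IH] p /=.
  case: (leafb p); last exact: Gt.
  by rewrite s0; case: (t p); rewrite !inE.
by case: (leafb p); [exact: Gs | exact: IH].
Qed.

Hypothesis pcS : prefix_closed S.

Lemma graft_supp (p y : word) : p ++ y \in S -> graft p y = t (p ++ y).
Proof.
elim: y p => [|a y IH] p /=; first by rewrite cats0.
rewrite -cat_rcons => pyS.
by rewrite (@leafb_rcons _ a) ?IH // (prefix_closed_catl pcS pyS).
Qed.

Lemma graft_leaf (p w y : word) (a : bool) :
  leafb (p ++ w) -> graft p (w ++ a :: y) = s y.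
Proof.
elim: w p => [|b w IH] p /=; first by rewrite cats0 => ->.
rewrite -cat_rcons => leaf_pw.
have pwS : rcons p b ++ w \in S by case/and3P: leaf_pw.
by rewrite (@leafb_rcons _ b) ?IH // (prefix_closed_catl pcS pwS).
Qed.

End Graft.

Theorem mainTheorem12 :
  forall u v : pattern,
    is_pattern u -> is_pattern v ->
    accepted goldenX u -> accepted goldenX v ->
    exists t : tree,
      goldenX t /\
      occurs_at t [::] u /\
      (forall w x : word, is_leaf u w -> size x = 2 -> occurs_at t (w ++ x) v).
Proof.
move=> u v pcu _ [t0 [G0 [z0 u_at_z0]]] [t1 [G1 [z1 v_at_z1]]].
pose t := graft (supp u) (shift t0 z0) (pad (shift t1 z1)) [::].
exists t; split.
  by apply: golden_graft; [exact: golden_shift | exact/golden_pad/golden_shift |].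
split=> [y yu | w [|a [|b [|? ?]]] // [wu [w0 w1]] _ y yv].
  by rewrite /t graft_supp //; exact: u_at_z0.
have leaf_w : leafb (supp u) w by rewrite /leafb wu w0 w1.
by rewrite /t -catA /= graft_leaf //; exact: v_at_z1.
Qed.
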